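(* Let $X$ be a set, $m\colon X\times X\to X$ a binary operation and $i\colon X\to X$ an involution ($i\circ i=1_X$) such that $i(m(x,y))=m(i(y),i(x))$ for all $x,y\in X$. Define $\theta,\varphi\colon X\times X\to X\times X$ by $\theta(x,y)=(i(x),m(x,y))$ and $\varphi(x,y)=(m(x,y),i(y))$. Then $(\theta,\varphi,m)$ is an involutive-2-link (in the category of sets) if and only if for all $x,y\in X$: $$m(i(x),m(x,y))=y\quad\text{and}\quad m(m(x,y),i(y))=x.$$
   Context: Involutive-2-link in a category: a triple $(\theta,\varphi,m)$ where $m\colon A\to B$ is a morphism and $\theta,\varphi\colon A\to A$ satisfy $\theta^2=\varphi^2=1_A$ and $\theta\varphi\theta=\varphi\theta\varphi$, and such that the three parallel morphisms $m,m\theta,m\varphi\colon A\to B$ are jointly monomorphic (in sets: the map $a\mapsto (m(a),m\theta(a),m\varphi(a))$ is injective). *)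

(* An involutive-2-link (theta, phi, m) in the category of sets:
   m : A -> B, theta, phi : A -> A with theta^2 = phi^2 = 1_A,
   theta phi theta = phi theta phi, and m, m theta, m phi jointly monomorphic
   (i.e. a |-> (m a, m (theta a), m (phi a)) is injective). *)
Definition involutive_2_link {A B : Type}
  (theta phi : A -> A) (m : A -> B) : Prop :=
  (forall a, theta (theta a) = a) /\
  (forall a, phi (phi a) = a) /\
  (forall a, theta (phi (theta a)) = phi (theta (phi a))) /\
  (forall a a', m a = m a' -> m (theta a) = m (theta a') ->
                m (phi a) = m (phi a') -> a = a').


(* Under the two cancellation laws, [m] recovers [y] from [m (theta (x, y))]
   and [x] from [m (phi (x, y))], so joint monicity is immediate; the braid
   relation reduces, after [i (m x y) = m (i y) (i x)], to the same two laws
   applied at [(i y, i x)]. Conversely the cancellation laws are the second,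
   resp. first, components of [theta^2 = 1] and [phi^2 = 1]. *)

Section TwoLinkOfInvolutiveMagma.

Variables (X : Type) (m : X -> X -> X) (i : X -> X).
Hypothesis i_invol : forall x, i (i x) = x.
Hypothesis i_antimorph : forall x y, i (m x y) = m (i y) (i x).

Definition theta (p : X * X) : X * X := (i (fst p), m (fst p) (snd p)).
Definition phi (p : X * X) : X * X := (m (fst p) (snd p), i (snd p)).
Definition mult (p : X * X) : X := m (fst p) (snd p).

Definition left_cancel : Prop := forall x y, m (i x) (m x y) = y.
Definition right_cancel : Prop := forall x y, m (m x y) (i y) = x.

Lemma theta_involutive_left_cancel :
  (forall p, theta (theta p) = p) -> left_cancel.
Proof. intros Htheta x y. exact (f_equal snd (Htheta (x, y))). Qed.

Lemma phi_involutive_right_cancel :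
  (forall p, phi (phi p) = p) -> right_cancel.
Proof. intros Hphi x y. exact (f_equal fst (Hphi (x, y))). Qed.

Section Cancellative.

Hypotheses (Hl : left_cancel) (Hr : right_cancel).

Lemma theta_involutive p : theta (theta p) = p.
Proof. destruct p as [x y]; unfold theta; simpl. now rewrite i_invol, Hl. Qed.

Lemma phi_involutive p : phi (phi p) = p.
Proof. destruct p as [x y]; unfold phi; simpl. now rewrite i_invol, Hr. Qed.

Lemma theta_phi_braid p : theta (phi (theta p)) = phi (theta (phi p)).
Proof.
  destruct p as [x y]; unfold theta, phi; simpl.
  rewrite Hl, Hr, i_antimorph.
  specialize (Hl (i y) (i x)); specialize (Hr (i y) (i x)).
  rewrite i_invol in Hl, Hr.
  now rewrite Hl, Hr.
Qed.

Lemma mult_theta_phi_jointly_monic p q :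
  mult (theta p) = mult (theta q) -> mult (phi p) = mult (phi q) -> p = q.
Proof.
  destruct p as [x y], q as [x' y']; unfold mult, theta, phi; simpl.
  rewrite !Hl, !Hr. now intros -> ->.
Qed.

End Cancellative.

Lemma involutive_2_link_iff_cancel :
  involutive_2_link theta phi mult <-> left_cancel /\ right_cancel.
Proof.
  split.
  - intros (Htheta & Hphi & _).
    split; [apply theta_involutive_left_cancel | apply phi_involutive_right_cancel];
      assumption.
  - intros [Hl Hr].
    repeat split.
    + apply theta_involutive; assumption.
    + apply phi_involutive; assumption.
    + apply theta_phi_braid; assumption.
    + intros p q _; apply mult_theta_phi_jointly_monic; assumption.
Qed.

End TwoLinkOfInvolutiveMagma.

Theorem mainTheorem2 (X : Type) (m : X -> X -> X) (i : X -> X)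
  (hi : forall x, i (i x) = x)
  (him : forall x y, i (m x y) = m (i y) (i x)) :
  involutive_2_link
    (fun p : X * X => (i (fst p), m (fst p) (snd p)))
    (fun p : X * X => (m (fst p) (snd p), i (snd p)))
    (fun p : X * X => m (fst p) (snd p))
  <->
  (forall x y, m (i x) (m x y) = y /\ m (m x y) (i y) = x).
Proof.
  split.
  - intros Hlink x y.
    apply (involutive_2_link_iff_cancel X m i hi him) in Hlink as [Hl Hr].
    split; [apply Hl | apply Hr].
  - intros H.
    apply (involutive_2_link_iff_cancel X m i hi him).
    split; intros x y; apply H.
Qed.
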